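(* Let $\{Y_x\}_{x\in\mathcal{X}}$ be a Gaussian process with prior mean $\mu_x$ and prior covariance $\sigma_{xx'}$. Let $\mathcal{D}\subset\mathcal{X}$ be a finite set of inputs with observed outputs $y_{\mathcal{D}}$, partitioned into pairwise disjoint sets $\mathcal{D}_1,\ldots,\mathcal{D}_M$ with $|\mathcal{D}_m|=|\mathcal{D}|/M$, and let $\mathcal{U}\subseteq\mathcal{X}\setminus\mathcal{D}$ be a finite set of test inputs partitioned into pairwise disjoint sets $\mathcal{U}_1,\ldots,\mathcal{U}_M$ with $|\mathcal{U}_m|=|\mathcal{U}|/M$. Let $\mathcal{S}\subset\mathcal{X}$ be a finite support set (common to all $M$ machines), and assume all matrix inverses below exist. For $\mathcal{B},\mathcal{B}'\subset\mathcal{X}$ and $m=1,\ldots,M$ define the local summary quantities $\dot{y}^m_{\mathcal{B}}\triangleq \Sigma_{\mathcal{B}\mathcal{D}_m}\Sigma^{-1}_{\mathcal{D}_m\mathcal{D}_m|\mathcal{S}}(y_{\mathcal{D}_m}-\mu_{\mathcal{D}_m})$ and $\dot{\Sigma}^m_{\mathcal{B}\mathcal{B}'}\triangleq \Sigma_{\mathcal{B}\mathcal{D}_m}\Sigma^{-1}_{\mathcal{D}_m\mathcal{D}_m|\mathcal{S}}\Sigma_{\mathcal{D}_m\mathcal{B}'}$, the global summary $\ddot{y}_{\mathcal{S}}\triangleq\sum_{m=1}^M\dot{y}^m_{\mathcal{S}}$ and $\ddot{\Sigma}_{\mathcal{S}\mathcal{S}}\triangleq\Sigma_{\mathcal{S}\mathcal{S}}+\sum_{m=1}^M\dot{\Sigma}^m_{\mathcal{S}\mathcal{S}}$,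 and $\Phi^m_{\mathcal{U}_m\mathcal{S}}\triangleq \Sigma_{\mathcal{U}_m\mathcal{S}}+\Sigma_{\mathcal{U}_m\mathcal{S}}\Sigma^{-1}_{\mathcal{S}\mathcal{S}}\dot{\Sigma}^m_{\mathcal{S}\mathcal{S}}-\dot{\Sigma}^m_{\mathcal{U}_m\mathcal{S}}$, with $\Phi^m_{\mathcal{S}\mathcal{U}_m}$ its transpose. Define the pPIC predictive mean and covariance blockwise by $$\widehat{\mu}^+_{\mathcal{U}_m}\triangleq\mu_{\mathcal{U}_m}+\left(\Phi^m_{\mathcal{U}_m\mathcal{S}}\ddot{\Sigma}^{-1}_{\mathcal{S}\mathcal{S}}\ddot{y}_{\mathcal{S}}-\Sigma_{\mathcal{U}_m\mathcal{S}}\Sigma^{-1}_{\mathcal{S}\mathcal{S}}\dot{y}^m_{\mathcal{S}}\right)+\dot{y}^m_{\mathcal{U}_m},$$ $$\widehat{\Sigma}^+_{\mathcal{U}_m\mathcal{U}_m}\triangleq\Sigma_{\mathcal{U}_m\mathcal{U}_m}-\left(\Phi^m_{\mathcal{U}_m\mathcal{S}}\Sigma^{-1}_{\mathcal{S}\mathcal{S}}\Sigma_{\mathcal{S}\mathcal{U}_m}-\Sigma_{\mathcal{U}_m\mathcal{S}}\Sigma^{-1}_{\mathcal{S}\mathcal{S}}\dot{\Sigma}^m_{\mathcal{S}\mathcal{U}_m}-\Phi^m_{\mathcal{U}_m\mathcal{S}}\ddot{\Sigma}^{-1}_{\mathcal{S}\mathcal{S}}\Phi^m_{\mathcal{S}\mathcal{U}_m}\right)-\dot{\Sigma}^m_{\mathcal{U}_m\mathcal{U}_m},$$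 and for $i\neq j$, $\widehat{\Sigma}^+_{\mathcal{U}_i\mathcal{U}_j}\triangleq\Sigma_{\mathcal{U}_i\mathcal{U}_j|\mathcal{S}}+\Phi^i_{\mathcal{U}_i\mathcal{S}}\ddot{\Sigma}^{-1}_{\mathcal{S}\mathcal{S}}\Phi^j_{\mathcal{S}\mathcal{U}_j}$; let $\widehat{\mu}^+_{\mathcal{U}}$ and $\widehat{\Sigma}^+_{\mathcal{U}\mathcal{U}}$ be the vector and matrix assembled from these blocks. Let the centralized PIC predictive distribution be $\mathcal{N}(\mu^{\mathrm{PIC}}_{\mathcal{U}|\mathcal{D}},\Sigma^{\mathrm{PIC}}_{\mathcal{U}\mathcal{U}|\mathcal{D}})$ with $$\mu^{\mathrm{PIC}}_{\mathcal{U}|\mathcal{D}}\triangleq\mu_{\mathcal{U}}+\widetilde{\Gamma}_{\mathcal{U}\mathcal{D}}(\Gamma_{\mathcal{D}\mathcal{D}}+\Lambda)^{-1}(y_{\mathcal{D}}-\mu_{\mathcal{D}}),\qquad \Sigma^{\mathrm{PIC}}_{\mathcal{U}\mathcal{U}|\mathcal{D}}\triangleq\Sigma_{\mathcal{U}\mathcal{U}}-\widetilde{\Gamma}_{\mathcal{U}\mathcal{D}}(\Gamma_{\mathcal{D}\mathcal{D}}+\Lambda)^{-1}\widetilde{\Gamma}_{\mathcal{D}\mathcal{U}},$$ where $\Gamma_{\mathcal{B}\mathcal{B}'}\triangleq\Sigma_{\mathcal{B}\mathcal{S}}\Sigma^{-1}_{\mathcal{S}\mathcal{S}}\Sigma_{\mathcal{S}\mathcal{B}'}$,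 $\Lambda$ is the block-diagonal matrix whose diagonal blocks are $\Sigma_{\mathcal{D}_m\mathcal{D}_m|\mathcal{S}}$ for $m=1,\ldots,M$, $\widetilde{\Gamma}_{\mathcal{U}\mathcal{D}}$ is the block matrix $(\widetilde{\Gamma}_{\mathcal{U}_i\mathcal{D}_m})_{i,m=1,\ldots,M}$ with $\widetilde{\Gamma}_{\mathcal{U}_i\mathcal{D}_m}=\Sigma_{\mathcal{U}_i\mathcal{D}_m}$ if $i=m$ and $\widetilde{\Gamma}_{\mathcal{U}_i\mathcal{D}_m}=\Gamma_{\mathcal{U}_i\mathcal{D}_m}$ otherwise, and $\widetilde{\Gamma}_{\mathcal{D}\mathcal{U}}$ is its transpose. Then $\widehat{\mu}^+_{\mathcal{U}}=\mu^{\mathrm{PIC}}_{\mathcal{U}|\mathcal{D}}$ and $\widehat{\Sigma}^+_{\mathcal{U}\mathcal{U}}=\Sigma^{\mathrm{PIC}}_{\mathcal{U}\mathcal{U}|\mathcal{D}}$.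
   Context: For finite sets $\mathcal{A},\mathcal{B}\subset\mathcal{X}$, $\mu_{\mathcal{A}}$ denotes the column vector of prior means $\mu_x$, $x\in\mathcal{A}$, and $\Sigma_{\mathcal{A}\mathcal{B}}$ the matrix of prior covariances $\sigma_{xx'}$, $x\in\mathcal{A}$, $x'\in\mathcal{B}$; $\Sigma_{\mathcal{B}\mathcal{A}}$ is the transpose of $\Sigma_{\mathcal{A}\mathcal{B}}$. The posterior covariance given $\mathcal{S}$ is $\Sigma_{\mathcal{A}\mathcal{B}|\mathcal{S}}\triangleq\Sigma_{\mathcal{A}\mathcal{B}}-\Sigma_{\mathcal{A}\mathcal{S}}\Sigma^{-1}_{\mathcal{S}\mathcal{S}}\Sigma_{\mathcal{S}\mathcal{B}}$. The vectors/matrices indexed by $\mathcal{D}$ and $\mathcal{U}$ are ordered consistently with the partitions $\mathcal{D}_1,\ldots,\mathcal{D}_M$ and $\mathcal{U}_1,\ldots,\mathcal{U}_M$. *)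

From HB Require Import structures.
From mathcomp Require Import all_boot all_order all_algebra.
Set Implicit Arguments. Unset Strict Implicit. Unset Printing Implicit Defensive.
Import Order.TTheory GRing.Theory Num.Theory.
Local Open Scope ring_scope.

Section Defs.
Variables (R : realFieldType) (X : Type).
Variables (mu : X -> R) (sigma : X -> X -> R).

(* Flat index k : 'I_(M*n) of a block-partitioned set <-> (block, offset),
   block-major order (the inverse of mxvec_index). *)
Definition blk {M n : nat} (k : 'I_(M * n)) : 'I_M * 'I_n :=
  enum_val (cast_ord (esym (@mxvec_cast M n)) k).

Definition flat {M n : nat} (f : 'I_M -> 'I_n -> X) : 'I_(M * n) -> X :=
  fun k => f (blk k).1 (blk k).2.

Definition muv {p} (A : 'I_p -> X) : 'cV[R]_p := \col_i mu (A i).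
Definition Sig {p q} (A : 'I_p -> X) (B : 'I_q -> X) : 'M[R]_(p, q) :=
  \matrix_(i, j) sigma (A i) (B j).

Definition condS {p q nS} (s : 'I_nS -> X) (A : 'I_p -> X) (B : 'I_q -> X) :=
  Sig A B - Sig A s *m invmx (Sig s s) *m Sig s B.

Definition Gam {p q nS} (s : 'I_nS -> X) (A : 'I_p -> X) (B : 'I_q -> X) :=
  Sig A s *m invmx (Sig s s) *m Sig s B.

Section Model.
Variables (M nD nU nS : nat).
Variables (d : 'I_M -> 'I_nD -> X) (u : 'I_M -> 'I_nU -> X) (s : 'I_nS -> X).
Variable (y : 'I_M -> 'I_nD -> R).

Definition yv (m : 'I_M) : 'cV[R]_nD := \col_l y m l.

Definition ydot {p} (m : 'I_M) (B : 'I_p -> X) : 'cV[R]_p :=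
  Sig B (d m) *m invmx (condS s (d m) (d m)) *m (yv m - muv (d m)).
Definition Sdot {p q} (m : 'I_M) (B : 'I_p -> X) (B' : 'I_q -> X) :=
  Sig B (d m) *m invmx (condS s (d m) (d m)) *m Sig (d m) B'.
Definition yddot : 'cV[R]_nS := \sum_(m < M) ydot m s.
Definition Sddot : 'M[R]_nS := Sig s s + \sum_(m < M) Sdot m s s.
Definition Phi (m : 'I_M) : 'M[R]_(nU, nS) :=
  Sig (u m) s + Sig (u m) s *m invmx (Sig s s) *m Sdot m s s - Sdot m (u m) s.

Definition muhat (m : 'I_M) : 'cV[R]_nU :=
  muv (u m) + (Phi m *m invmx Sddot *m yddot
               - Sig (u m) s *m invmx (Sig s s) *m ydot m s) + ydot m (u m).

Definition Sighat (i j : 'I_M) : 'M[R]_nU :=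
  if i == j then
    Sig (u i) (u i)
    - (Phi i *m invmx (Sig s s) *m Sig s (u i)
       - Sig (u i) s *m invmx (Sig s s) *m Sdot i s (u i)
       - Phi i *m invmx Sddot *m (Phi i)^T)
    - Sdot i (u i) (u i)
  else condS s (u i) (u j) + Phi i *m invmx Sddot *m (Phi j)^T.

Definition muhatU : 'cV[R]_(M * nU) :=
  \col_k muhat (blk k).1 (blk k).2 0.
Definition SighatU : 'M[R]_(M * nU) :=
  \matrix_(k, l) Sighat (blk k).1 (blk l).1 (blk k).2 (blk l).2.

Definition Dx := flat d.
Definition Ux := flat u.
Definition yD : 'cV[R]_(M * nD) := \col_k y (blk k).1 (blk k).2.

Definition Lambda : 'M[R]_(M * nD) :=
  \matrix_(k, l) if (blk k).1 == (blk l).1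
                 then condS s (d (blk k).1) (d (blk k).1) (blk k).2 (blk l).2
                 else 0.
Definition Gtilde : 'M[R]_(M * nU, M * nD) :=
  \matrix_(k, l) if (blk k).1 == (blk l).1 then Sig Ux Dx k l
                 else Gam s Ux Dx k l.

Definition muPIC : 'cV[R]_(M * nU) :=
  muv Ux + Gtilde *m invmx (Gam s Dx Dx + Lambda) *m (yD - muv Dx).
Definition SigPIC : 'M[R]_(M * nU) :=
  Sig Ux Ux - Gtilde *m invmx (Gam s Dx Dx + Lambda) *m Gtilde^T.
End Model.
End Defs.

Definition covariance_fun (R : realFieldType) (X : Type) (sigma : X -> X -> R) :=
  (forall x x', sigma x x' = sigma x' x) /\
  (forall (n : nat) (xs : 'I_n -> X) (c : 'I_n -> R),
      0 <= \sum_(i < n) \sum_(j < n) c i * c j * sigma (xs i) (xs j)).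

From HB Require Import structures.
From mathcomp Require Import all_boot all_order all_algebra.
Import Order.TTheory GRing.Theory Num.Theory.
Set Implicit Arguments. Unset Strict Implicit. Unset Printing Implicit Defensive.
Local Open Scope ring_scope.

(* With P = Sigma_DS and Lambda block
   diagonal, Sddot = Sigma_SS + P^T Lambda^-1 P, so the Woodbury identity turns
   (P Sigma_SS^-1 P^T + Lambda)^-1 into Lambda^-1 - Lambda^-1 P Sddot^-1 P^T Lambda^-1,
   in which every product only involves the local summaries of one machine.
   The i-th block row of Gtilde is Gamma_{U_i D} plus Sigma_{U_i D_i|S} in block
   column i, and Phi^i = Sigma_{U_i S} - Sigma_{U_i D_i|S} Sigma^-1_{D_i D_i|S}
   Sigma_{D_i S}; with these two facts the blocks of the PIC mean and covariance
   collapse to the pPIC formulas. *)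

Section BlockMatrices.
Variables (R : comPzRingType) (M n : nat).

Definition unblk (p : 'I_M * 'I_n) : 'I_(M * n) :=
  cast_ord (mxvec_cast M n) (enum_rank p).

Lemma unblkK : cancel unblk blk.
Proof. by move=> p; rewrite /blk /unblk cast_ordK enum_rankK. Qed.

Lemma blkK : cancel blk unblk.
Proof. by move=> k; rewrite /blk /unblk enum_valK cast_ordKV. Qed.

(* [(inblk m)^T *m A] is the [m]-th block row of [A]. *)
Definition inblk (m : 'I_M) : 'M[R]_(M * n, n) :=
  \matrix_(k, l) (blk k == (m, l))%:R.

Definition blkcol q (B : 'I_M -> 'M[R]_(n, q)) : 'M_(M * n, q) :=
  \sum_m inblk m *m B m.
Definition blkrow p (C : 'I_M -> 'M[R]_(p, n)) : 'M_(p, M * n) :=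
  \sum_m C m *m (inblk m)^T.
Definition blkdiag (F : 'I_M -> 'M[R]_n) : 'M_(M * n) :=
  \sum_m inblk m *m F m *m (inblk m)^T.

Lemma sum_delta_blk (F : 'I_(M * n) -> R) (p : 'I_M * 'I_n) :
  \sum_k (blk k == p)%:R * F k = F (unblk p).
Proof.
rewrite (bigD1 (unblk p)) //= unblkK eqxx mul1r big1 ?addr0 // => k kp.
by case: eqP => [e|]; [move: kp; rewrite -e blkK eqxx | rewrite mul0r].
Qed.

Lemma inblkT_mul q (A : 'M[R]_(M * n, q)) m :
  (inblk m)^T *m A = \matrix_(l, j) A (unblk (m, l)) j.
Proof.
apply/matrixP => l j; rewrite !mxE -(sum_delta_blk (fun k => A k j)).
by apply: eq_bigr => k _; rewrite !mxE.
Qed.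

Lemma mul_inblk p (A : 'M[R]_(p, M * n)) m :
  A *m inblk m = \matrix_(j, l) A j (unblk (m, l)).
Proof.
apply/matrixP => j l; rewrite !mxE -(sum_delta_blk (fun k => A j k)).
by apply: eq_bigr => k _; rewrite !mxE mulrC.
Qed.

Lemma inblkT_inblk m m' :
  (inblk m)^T *m inblk m' = if m == m' then 1%:M else 0.
Proof.
rewrite inblkT_mul; apply/matrixP => l l'; rewrite !mxE unblkK xpair_eqE.
by case: (m == m'); rewrite !mxE.
Qed.

Lemma blkdiag1 : blkdiag (fun=> 1%:M) = 1%:M.
Proof.
apply/matrixP => k k'; rewrite summxE.
under eq_bigr => m _ do rewrite mulmx1 mxE.
rewrite pair_bigA /= (bigD1 (blk k)) //= big1 => [|p pk]; last first.
  by rewrite !mxE -surjective_pairing [blk k == p]eq_sym (negbTE pk) mul0r.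
rewrite !mxE -!surjective_pairing eqxx mul1r addr0 [blk k' == _]eq_sym.
by rewrite (can_eq blkK) eq_sym.
Qed.

Lemma inblkT_blkcol q (B : 'I_M -> 'M[R]_(n, q)) i :
  (inblk i)^T *m blkcol B = B i.
Proof.
rewrite mulmx_sumr (bigD1 i) //= big1 ?addr0 => [|m mi].
  by rewrite mulmxA inblkT_inblk eqxx mul1mx.
by rewrite mulmxA inblkT_inblk eq_sym (negbTE mi) mul0mx.
Qed.

Lemma blkrow_inblk p (C : 'I_M -> 'M[R]_(p, n)) j :
  blkrow C *m inblk j = C j.
Proof.
rewrite mulmx_suml (bigD1 j) //= big1 ?addr0 => [|m mj].
  by rewrite -mulmxA inblkT_inblk eqxx mulmx1.
by rewrite -mulmxA inblkT_inblk (negbTE mj) mulmx0.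
Qed.

Lemma blkcolE q (A : 'M[R]_(M * n, q)) : A = blkcol (fun m => (inblk m)^T *m A).
Proof.
rewrite -{1}[A]mul1mx -blkdiag1 mulmx_suml.
by apply: eq_bigr => m _; rewrite mulmx1 mulmxA.
Qed.

Lemma blkrowE p (A : 'M[R]_(p, M * n)) : A = blkrow (fun m => A *m inblk m).
Proof.
rewrite -{1}[A]mulmx1 -blkdiag1 mulmx_sumr.
by apply: eq_bigr => m _; rewrite mulmx1 !mulmxA.
Qed.

Lemma eq_blkrows q (A B : 'M[R]_(M * n, q)) :
  (forall i, (inblk i)^T *m A = (inblk i)^T *m B) -> A = B.
Proof.
by move=> eqAB; rewrite [A]blkcolE [B]blkcolE /blkcol; under eq_bigr do rewrite eqAB.
Qed.

Lemma eq_blkcols p (A B : 'M[R]_(p, M * n)) :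
  (forall j, A *m inblk j = B *m inblk j) -> A = B.
Proof.
by move=> eqAB; rewrite [A]blkrowE [B]blkrowE /blkrow; under eq_bigr do rewrite eqAB.
Qed.

Lemma blkrow_mul_blkcol p q (C : 'I_M -> 'M[R]_(p, n)) (B : 'I_M -> 'M[R]_(n, q)) :
  blkrow C *m blkcol B = \sum_m C m *m B m.
Proof.
rewrite mulmx_suml; apply: eq_bigr => m _.
by rewrite -mulmxA inblkT_blkcol.
Qed.

Lemma blkdiag_blkcol (F : 'I_M -> 'M[R]_n) :
  blkdiag F = blkcol (fun m => F m *m (inblk m)^T).
Proof. by apply: eq_bigr => m _; rewrite mulmxA. Qed.

Lemma blkdiag_mul_blkcol q (F : 'I_M -> 'M[R]_n) (B : 'I_M -> 'M[R]_(n, q)) :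
  blkdiag F *m blkcol B = blkcol (fun m => F m *m B m).
Proof.
rewrite blkdiag_blkcol /blkcol mulmx_suml; apply: eq_bigr => m _.
by rewrite -!mulmxA inblkT_blkcol.
Qed.

Lemma blkrow_mul_blkdiag p (C : 'I_M -> 'M[R]_(p, n)) (F : 'I_M -> 'M[R]_n) :
  blkrow C *m blkdiag F = blkrow (fun m => C m *m F m).
Proof.
rewrite blkdiag_blkcol blkrow_mul_blkcol.
by apply: eq_bigr => m _; rewrite mulmxA.
Qed.

Lemma blkdiag_mul (F G : 'I_M -> 'M[R]_n) :
  blkdiag F *m blkdiag G = blkdiag (fun m => F m *m G m).
Proof.
rewrite [blkdiag G]blkdiag_blkcol blkdiag_mul_blkcol.
by apply: eq_bigr => m _; rewrite !mulmxA.
Qed.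

Lemma inblkT_blkdiag (F : 'I_M -> 'M[R]_n) i :
  (inblk i)^T *m blkdiag F = F i *m (inblk i)^T.
Proof. by rewrite blkdiag_blkcol inblkT_blkcol. Qed.

Lemma blkdiag_inblk (F : 'I_M -> 'M[R]_n) j : blkdiag F *m inblk j = inblk j *m F j.
Proof. exact: (blkrow_inblk (fun m => inblk m *m F m)). Qed.

Lemma blkdiag_block (F : 'I_M -> 'M[R]_n) i j :
  (inblk i)^T *m blkdiag F *m inblk j = if i == j then F i else 0.
Proof.
rewrite inblkT_blkdiag -mulmxA inblkT_inblk.
by case: eqP => _; rewrite ?mulmx1 ?mulmx0.
Qed.

Lemma tr_blkdiag (F : 'I_M -> 'M[R]_n) :
  (blkdiag F)^T = blkdiag (fun m => (F m)^T).
Proof.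
rewrite /blkdiag raddf_sum; apply: eq_bigr => m _.
by rewrite /= !trmx_mul trmxK mulmxA.
Qed.

End BlockMatrices.

Arguments inblk {R M n} m.
Arguments unblk {M n} p.

Lemma inblk_block (R : comPzRingType) M n1 n2 (A : 'M[R]_(M * n1, M * n2)) i j :
  (inblk i)^T *m A *m inblk j = \matrix_(l, l') A (unblk (i, l)) (unblk (j, l')).
Proof. by rewrite mul_inblk inblkT_mul; apply/matrixP => l l'; rewrite !mxE. Qed.

Lemma eq_blocks (R : comPzRingType) M n1 n2 (A B : 'M[R]_(M * n1, M * n2)) :
  (forall i j, (inblk i)^T *m A *m inblk j = (inblk i)^T *m B *m inblk j) -> A = B.
Proof. by move=> eqAB; apply: eq_blkrows => i; apply: eq_blkcols => j. Qed.

Lemma inblk_if_block (R : comPzRingType) M n1 n2 (A B : 'M[R]_(M * n1, M * n2)) i j :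
  (inblk i)^T *m (\matrix_(k, l) if (blk k).1 == (blk l).1 then A k l else B k l)
     *m inblk j
  = if i == j then (inblk i)^T *m A *m inblk j else (inblk i)^T *m B *m inblk j.
Proof.
rewrite !inblk_block; apply/matrixP => l l'.
by rewrite !mxE !unblkK /=; case: eqP; rewrite mxE.
Qed.

Lemma inblkT_col_blk (R : comPzRingType) M n (F : 'I_M -> 'cV[R]_n) i :
  (inblk i)^T *m (\col_k F (blk k).1 (blk k).2 0) = F i.
Proof. by rewrite inblkT_mul; apply/matrixP => l j; rewrite !mxE unblkK (ord1 j). Qed.

Lemma inblk_matrix_blk (R : comPzRingType) M n (F : 'I_M -> 'I_M -> 'M[R]_n) i j :
  (inblk i)^T *m (\matrix_(k, l) F (blk k).1 (blk l).1 (blk k).2 (blk l).2) *m inblk j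
  = F i j.
Proof. by rewrite inblk_block; apply/matrixP => l l'; rewrite !mxE !unblkK. Qed.

Lemma invmx_rinv (R : comUnitRingType) n (A B : 'M[R]_n) :
  A *m B = 1%:M -> invmx A = B.
Proof.
move=> AB; have [Au _] := mulmx1_unit AB.
by rewrite -[invmx A]mulmx1 -AB mulmxA mulVmx // mul1mx.
Qed.

Lemma invmx_woodbury (R : comUnitRingType) n k (A : 'M[R]_n) (C : 'M[R]_k)
    (U : 'M[R]_(n, k)) (V : 'M[R]_(k, n)) :
  A \in unitmx -> C \in unitmx -> C + V *m invmx A *m U \in unitmx ->
  invmx (A + U *m invmx C *m V)
  = invmx A - invmx A *m U *m invmx (C + V *m invmx A *m U) *m V *m invmx A.
Proof.
set S := C + _ => Au Cu Su; apply: invmx_rinv.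
have US : U *m invmx C *m V *m invmx A *m U = U *m invmx C *m S - U.
  by rewrite /S mulmxDr mulmxKV // !mulmxA addrC addKr.
rewrite mulmxDl !mulmxBr !mulmxA mulmxV // mul1mx US.
by rewrite !mulmxBl mulmxK // subKr subrK.
Qed.

Section PIC.
Variables (R : realFieldType) (X : Type) (mu : X -> R) (sigma : X -> X -> R).
Variables (M nD nU nS : nat) (d : 'I_M -> 'I_nD -> X) (u : 'I_M -> 'I_nU -> X).
Variables (s : 'I_nS -> X) (y : 'I_M -> 'I_nD -> R).
Hypothesis sigma_sym : forall x x', sigma x x' = sigma x' x.
Hypothesis Sss_unit : Sig sigma s s \in unitmx.
Hypothesis condS_unit : forall m, condS sigma s (d m) (d m) \in unitmx.
Hypothesis Sddot_unit : Sddot sigma d s \in unitmx.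

Local Notation Sg := (Sig sigma).
Local Notation K := (invmx (Sig sigma s s)).
Local Notation W := (invmx (Sddot sigma d s)).
Local Notation iL m := (invmx (condS sigma s (d m) (d m))).
Local Notation Li := (blkdiag (fun m => iL m)).
Local Notation P := (Sig sigma (Dx d) s).
Local Notation Pt := (Sig sigma s (Dx d)).
Local Notation resid m := (yv y m - muv mu (d m)).
Local Notation Cud i := (condS sigma s (u i) (d i)).
Local Notation Grow i := ((inblk i)^T *m Gtilde sigma d u s).

Lemma Sig_flatl n q (f : 'I_M -> 'I_n -> X) (B : 'I_q -> X) :
  Sg (flat f) B = blkcol (fun m => Sg (f m) B).
Proof.
apply: eq_blkrows => i; rewrite inblkT_blkcol inblkT_mul.
by apply/matrixP => l j; rewrite !mxE /flat unblkK.
Qed.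

Lemma Sig_flatr p n (A : 'I_p -> X) (f : 'I_M -> 'I_n -> X) :
  Sg A (flat f) = blkrow (fun m => Sg A (f m)).
Proof.
apply: eq_blkcols => j; rewrite blkrow_inblk mul_inblk.
by apply/matrixP => l j'; rewrite !mxE /flat unblkK.
Qed.

Lemma muv_flat n (f : 'I_M -> 'I_n -> X) :
  muv mu (flat f) = blkcol (fun m => muv mu (f m)).
Proof.
apply: eq_blkrows => i; rewrite inblkT_blkcol inblkT_mul.
by apply/matrixP => l j; rewrite !mxE /flat unblkK.
Qed.

Lemma resid_flat : yD y - muv mu (Dx d) = blkcol (fun m => resid m).
Proof.
apply: eq_blkrows => i; rewrite inblkT_blkcol mulmxBr muv_flat inblkT_blkcol.
by congr (_ - _); rewrite inblkT_mul; apply/matrixP => l j; rewrite !mxE unblkK.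
Qed.

Lemma tr_Sig p q (A : 'I_p -> X) (B : 'I_q -> X) : (Sg A B)^T = Sg B A.
Proof. by apply/matrixP => i j; rewrite !mxE sigma_sym. Qed.

Lemma tr_condS p q (A : 'I_p -> X) (B : 'I_q -> X) :
  (condS sigma s A B)^T = condS sigma s B A.
Proof. by rewrite /condS raddfB /= !trmx_mul trmx_inv !tr_Sig mulmxA. Qed.

Lemma Lambda_blkdiag : Lambda sigma d s = blkdiag (fun m => condS sigma s (d m) (d m)).
Proof.
apply: eq_blocks => i j; rewrite blkdiag_block /Lambda inblk_block.
by apply/matrixP => l l'; rewrite !mxE !unblkK /=; case: eqP => [->|]; rewrite ?mxE.
Qed.

Lemma Lambda_mul_blkdiag_inv : Lambda sigma d s *m Li = 1%:M.
Proof.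
rewrite Lambda_blkdiag blkdiag_mul -blkdiag1 /blkdiag.
by apply: eq_bigr => m _; rewrite mulmxV.
Qed.

Lemma Sddot_blk : Sddot sigma d s = Sg s s + Pt *m Li *m P.
Proof.
rewrite Sig_flatl Sig_flatr blkrow_mul_blkdiag blkrow_mul_blkcol.
by congr (_ + _); apply: eq_bigr => m _.
Qed.

Lemma invmx_PIC :
  invmx (Gam sigma s (Dx d) (Dx d) + Lambda sigma d s) = Li - Li *m P *m W *m Pt *m Li.
Proof.
have [Lu _] := mulmx1_unit Lambda_mul_blkdiag_inv.
have := invmx_woodbury (U := P) (V := Pt) Lu Sss_unit.
rewrite (invmx_rinv Lambda_mul_blkdiag_inv) -Sddot_blk => /(_ Sddot_unit).
by rewrite /Gam addrC.
Qed.

Lemma Sig_flat_block n1 n2 (f : 'I_M -> 'I_n1 -> X) (g : 'I_M -> 'I_n2 -> X) i j :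
  (inblk i)^T *m Sg (flat f) (flat g) *m inblk j = Sg (f i) (g j).
Proof. by rewrite Sig_flatr -mulmxA blkrow_inblk Sig_flatl inblkT_blkcol. Qed.

Lemma Gam_flat_block n1 n2 (f : 'I_M -> 'I_n1 -> X) (g : 'I_M -> 'I_n2 -> X) i j :
  (inblk i)^T *m Gam sigma s (flat f) (flat g) *m inblk j = Gam sigma s (f i) (g j).
Proof.
rewrite /Gam Sig_flatl Sig_flatr -!mulmxA blkrow_inblk !mulmxA.
by rewrite inblkT_blkcol.
Qed.

Lemma Gtilde_row i : Grow i = Sg (u i) s *m K *m Pt + Cud i *m (inblk i)^T.
Proof.
apply: eq_blkcols => m; rewrite inblk_if_block Sig_flat_block Gam_flat_block.
rewrite mulmxDl -[Cud i *m _ *m _]mulmxA inblkT_inblk.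
rewrite -[_ *m Pt *m _]mulmxA Sig_flatr blkrow_inblk.
case: eqP => [<-|_]; last by rewrite mulmx0 addr0.
by rewrite mulmx1 subrKC.
Qed.

Lemma Phi_cond i : Phi sigma d u s i = Sg (u i) s - Cud i *m iL i *m Sg (d i) s.
Proof. by rewrite /Phi /Sdot /condS /Gam !mulmxA !mulmxBl opprB addrA. Qed.

Lemma Gtilde_Li_P i :
  Grow i *m Li *m P = Sg (u i) s *m K *m Sddot sigma d s - Phi sigma d u s i.
Proof.
have PtLiP : Pt *m Li *m P = Sddot sigma d s - Sg s s by rewrite Sddot_blk addrC addKr.
rewrite Gtilde_row 2!mulmxDl -!mulmxA (mulmxA Pt) PtLiP (mulmxA _ Li) inblkT_blkdiag.
rewrite -mulmxA Sig_flatl inblkT_blkcol mulmxBr mulVmx // mulmxBr mulmx1.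
by rewrite Phi_cond !mulmxA opprB addrA addrAC.
Qed.

Lemma Pt_Li_resid : Pt *m Li *m blkcol (fun m => resid m) = yddot mu sigma d s y.
Proof. by rewrite Sig_flatr blkrow_mul_blkdiag blkrow_mul_blkcol. Qed.

Lemma Gtilde_Li_resid i :
  Grow i *m Li *m blkcol (fun m => resid m)
  = Sg (u i) s *m K *m yddot mu sigma d s y + Cud i *m iL i *m resid i.
Proof.
rewrite Gtilde_row 2!mulmxDl -!mulmxA (mulmxA Pt) Pt_Li_resid (mulmxA _ Li).
by rewrite inblkT_blkdiag -mulmxA inblkT_blkcol !mulmxA.
Qed.

Lemma ydot_cond i :
  ydot mu sigma d s y i (u i)
  = Sg (u i) s *m K *m ydot mu sigma d s y i s + Cud i *m iL i *m resid i.
Proof. by rewrite /ydot /condS /Gam !mulmxA !mulmxBl subrKC. Qed.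

Lemma muPIC_block i : (inblk i)^T *m muPIC mu sigma d u s y = muhat mu sigma d u s y i.
Proof.
rewrite /muPIC mulmxDr muv_flat inblkT_blkcol invmx_PIC resid_flat !mulmxA.
have PtLir Y : Y *m Pt *m Li *m blkcol (fun m => resid m) = Y *m yddot mu sigma d s y.
  by rewrite -!mulmxA (mulmxA Pt) Pt_Li_resid.
rewrite mulmxBr mulmxBl Gtilde_Li_resid !mulmxA Gtilde_Li_P PtLir.
rewrite [(_ - Phi _ _ _ _ i) *m W]mulmxBl mulmxK // [(_ - _ *m W) *m _]mulmxBl.
rewrite /muhat ydot_cond -[RHS]addrA subrKA; congr (_ + _).
by rewrite [_ + Cud i *m _ *m _]addrC addrKA opprK addrC.
Qed.

Lemma tr_Li : Li^T = Li.
Proof.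
by rewrite tr_blkdiag /blkdiag; apply: eq_bigr => m _; rewrite trmx_inv tr_condS.
Qed.

Lemma tr_Sddot : (Sddot sigma d s)^T = Sddot sigma d s.
Proof. by rewrite Sddot_blk raddfD /= !trmx_mul tr_Li !tr_Sig mulmxA. Qed.

Lemma tr_Phi_cond j :
  Sg s (d j) *m iL j *m (Cud j)^T = Sg s (u j) - (Phi sigma d u s j)^T.
Proof.
rewrite tr_condS Phi_cond [in RHS]raddfB /= !trmx_mul trmx_inv !tr_condS !tr_Sig.
by rewrite mulmxA subKr.
Qed.

Lemma tr_Gtilde_row j : (Grow j)^T = P *m K *m Sg s (u j) + inblk j *m (Cud j)^T.
Proof. by rewrite Gtilde_row raddfD /= !trmx_mul trmxK trmx_inv !tr_Sig mulmxA. Qed.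

Lemma Gtilde_Li_inblk i j :
  Grow i *m Li *m inblk j
  = Sg (u i) s *m K *m Sg s (d j) *m iL j + (if i == j then Cud i *m iL i else 0).
Proof.
rewrite Gtilde_row 2!mulmxDl -!mulmxA blkdiag_inblk (mulmxA Pt) Sig_flatr blkrow_inblk.
rewrite (mulmxA (inblk i)^T) inblkT_inblk !mulmxA.
by case: eqP => [<-|_]; rewrite ?mulmx1 ?mulmx0 ?mul0mx.
Qed.

Lemma Gtilde_Li_GtildeT i j :
  Grow i *m Li *m (Grow j)^T
  = (Sg (u i) s *m K *m Sddot sigma d s - Phi sigma d u s i) *m K *m Sg s (u j)
    + (Sg (u i) s *m K *m Sg s (u j) - Sg (u i) s *m K *m (Phi sigma d u s j)^T)
    + (if i == j then Cud i *m iL i *m (Cud i)^T else 0).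
Proof.
rewrite tr_Gtilde_row mulmxDr !mulmxA Gtilde_Li_P Gtilde_Li_inblk.
rewrite [(_ + (if _ then _ else _)) *m _]mulmxDl -addrA; congr (_ + _); congr (_ + _).
  by rewrite -!mulmxA (mulmxA (Sg s (d j))) tr_Phi_cond !mulmxBr !mulmxA.
by case: eqP => [<-|_]; rewrite ?mul0mx.
Qed.

Lemma Pt_Li_GtildeT j :
  Pt *m Li *m (Grow j)^T = Sddot sigma d s *m K *m Sg s (u j) - (Phi sigma d u s j)^T.
Proof.
rewrite -tr_Sig -tr_Li -!trmx_mul mulmxA Gtilde_Li_P raddfB /= !trmx_mul tr_Sddot.
by rewrite trmx_inv !tr_Sig mulmxA.
Qed.

Lemma Gtilde_correction i j :
  Grow i *m (Li - Li *m P *m W *m Pt *m Li) *m (Grow j)^T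
  = Sg (u i) s *m K *m Sg s (u j)
    - Phi sigma d u s i *m W *m (Phi sigma d u s j)^T
    + (if i == j then Cud i *m iL i *m (Cud i)^T else 0).
Proof.
rewrite mulmxBr mulmxBl !mulmxA Gtilde_Li_P -[_ *m Pt *m Li *m _]mulmxA.
rewrite -[_ *m Pt *m _]mulmxA (mulmxA Pt) Pt_Li_GtildeT Gtilde_Li_GtildeT.
set Z := _ - Phi _ _ _ _ i.
have ZWPhi : Z *m W *m (Phi sigma d u s j)^T
    = Sg (u i) s *m K *m (Phi sigma d u s j)^T
      - Phi sigma d u s i *m W *m (Phi sigma d u s j)^T.
  by rewrite /Z !mulmxBl mulmxK.
rewrite mulmxBr !mulmxA mulmxKV // ZWPhi -[Z *m K *m _ + _ + _]addrA.
by rewrite opprD addrACA subrr add0r opprK addrAC subrKA.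
Qed.

Lemma SigPIC_block i j :
  (inblk i)^T *m SigPIC sigma d u s *m inblk j
  = condS sigma s (u i) (u j) + Phi sigma d u s i *m W *m (Phi sigma d u s j)^T
    - (if i == j then Cud i *m iL i *m (Cud i)^T else 0).
Proof.
rewrite /SigPIC mulmxBr mulmxBl Sig_flat_block invmx_PIC !mulmxA.
have GtT : (Gtilde sigma d u s)^T *m inblk j = (Grow j)^T by rewrite trmx_mul trmxK.
rewrite -[_ *m (Gtilde _ _ _ _)^T *m _]mulmxA GtT Gtilde_correction.
by rewrite opprD opprB !addrA (addrAC (Sg (u i) (u j))).
Qed.

Lemma Sighat_cond i j :
  Sighat sigma d u s i j
  = condS sigma s (u i) (u j) + Phi sigma d u s i *m W *m (Phi sigma d u s j)^T
    - (if i == j then Cud i *m iL i *m (Cud i)^T else 0).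
Proof.
rewrite /Sighat; case: eqVneq => [<-|_]; last by rewrite subr0.
set L := iL i.
have PhiK : Phi sigma d u s i *m K *m Sg s (u i)
    = Sg (u i) s *m K *m Sg s (u i) - Cud i *m L *m Gam sigma s (d i) (u i).
  by rewrite Phi_cond /Gam !mulmxA -!mulmxBl.
have DlLDlT : Cud i *m L *m (Cud i)^T
    = Sdot sigma d s i (u i) (u i) - Sg (u i) s *m K *m Sdot sigma d s i s (u i)
      - Cud i *m L *m Gam sigma s (d i) (u i).
  rewrite tr_condS {2}/condS mulmxBr; congr (_ + _).
  by rewrite /condS !mulmxBl /Sdot /Gam !mulmxA.
rewrite PhiK DlLDlT [condS _ _ (u i) (u i)]/condS !opprB !addrA.
by rewrite [RHS](ACl (1*3*5*4*2*6)).
Qed.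

End PIC.

Theorem theorem2 (R : realFieldType) (X : Type)
  (mu : X -> R) (sigma : X -> X -> R) (M nD nU nS : nat)
  (d : 'I_M -> 'I_nD -> X) (u : 'I_M -> 'I_nU -> X) (s : 'I_nS -> X)
  (y : 'I_M -> 'I_nD -> R) :
  covariance_fun sigma ->
  (forall m l m' l', d m l = d m' l' -> m = m' /\ l = l') ->
  (forall i a i' a', u i a = u i' a' -> i = i' /\ a = a') ->
  (forall i a m l, u i a <> d m l) ->
  injective s ->
  Sig sigma s s \in unitmx ->
  (forall m, condS sigma s (d m) (d m) \in unitmx) ->
  Sddot sigma d s \in unitmx ->
  (Gam sigma s (Dx d) (Dx d) + Lambda sigma d s) \in unitmx ->
  muhatU mu sigma d u s y = muPIC mu sigma d u s y /\
  SighatU sigma d u s = SigPIC sigma d u s.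
Proof.
move=> [sigma_sym _] _ _ _ _ Sss_unit condS_unit Sddot_unit _; split.
  apply: eq_blkrows => i; rewrite muPIC_block //.
  exact: (inblkT_col_blk (muhat mu sigma d u s y)).
apply: eq_blocks => i j; rewrite SigPIC_block // -Sighat_cond //.
exact: (inblk_matrix_blk (Sighat sigma d u s)).
Qed.
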